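(* Let $1\le n\le N$, $E\in I$, and let $$\gamma\ge\tfrac14\,n^{-1/\rho}\,3^{-(2n+1)d/\rho}\,\kappa^{1/\rho}\,L_0^{-\frac{2p^{(n)}+(2n+1)d}{\rho}},\qquad \tau_n>\frac{2p^{(n)}+(2n+1)d}{\rho}.$$ There exists $\bar L_0^*=\bar L_0^*(n,d,\kappa,\rho,M,\mathrm r_0,s_0^{(n)},r_n)$ such that if $L_0\ge\bar L_0^*$, then there is $\bar g_0^*=\bar g_0^*(n,d,M,\mathrm r_0,s_0^{(n)},\gamma)$ such that for all $|g|>\bar g_0^*$: if the cube $\Lambda^{(n)}_{L_0}(\mathbf u)$ is $(E,\gamma)$-Good, then it is $(E,\tfrac12)$-NS.
   Context: Setting. Fix $N\ge2$, $d\ge1$, $r>0$, $g\ne0$. Points of $\mathbb Z^{nd}$ are $\mathbf x=(x_1,\dots,x_n)$, $x_j\in\mathbb Z^d$, $\|x_j\|=\max_i|x_j^{(i)}|$, $\|\mathbf x\|=\max_j\|x_j\|$, $\langle\mathbf x\rangle=\max\{1,\|\mathbf x\|\}$. Operator $\mathbf H^{(n)}_\omega=\frac1g(\mathbf T+\mathbf U)+\mathbf V(\cdot,\omega)$ on $\ell^2(\mathbb Z^{nd})$: $\mathbf T(\mathbf x,\mathbf y)=\langle y_j-x_j\rangle^{-r}$ if there is $j$ with $x_i=y_i$ for all $i\ne j$, else $0$; $\mathbf U(\mathbf x)=\sum_{j_1<j_2}U(x_{j_1},x_{j_2})$, $U$ symmetric, $|U|\le M_1$, $U(x,x')=0$ if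 $\|x-x'\|\ge\mathrm r_0$ ($\mathrm r_0\ge1$); $\mathbf V(\mathbf x,\omega)=\sum_jV(x_j,\omega)$, $V(x,\omega)$ i.i.d. with distribution $\mu$, $\operatorname{supp}\mu\subset[-M,M]$, Hölder continuous of order $\rho>0$ with $\mathcal K_\rho(\mu)>0$ (where $1/\mathcal K_\rho(\mu)=\inf_{\kappa>0}\sup_{0<|a-b|\le\kappa}|a-b|^{-\rho}\mu([a,b])$), and $\kappa\in(0,\mathcal K_\rho(\mu))$ fixed. Cubes $\Lambda^{(n)}_L(\mathbf u)=\{\mathbf x:\|\mathbf x-\mathbf u\|\le L\}$; $\mathbf H^{(n)}_\Lambda$ = restriction to $\Lambda$, $\mathbf G^{(n)}_\Lambda(E)=(\mathbf H^{(n)}_\Lambda-E)^{-1}$. Sobolev norm of a matrix $\mathcal M$ on $X\times Y$: $\|\mathcal M\|_s^2=C_0\sum_{\mathbf v\in X-Y}(\sup_{\mathbf x-\mathbf y=\mathbf v}|\mathcal M(\mathbf x,\mathbf y)|)^2\langle\mathbf v\rangle^{2s}$, $C_0=C_0(s_0^{(n)})>0$ fixed. With $\tau_n\ge0$, $nd/2<s_0^{(n)}\le r_n<r-nd/2$: $\Lambda^{(n)}_L(\mathbf u)$ is $(E,\tfrac12)$-NS if $\mathbf G^{(n)}_{\Lambda^{(n)}_L(\mathbf u)}(E)$ exists and $\|\mathbf G^{(n)}_{\Lambda^{(n)}_L(\mathbf u)}(E)\|_s\le L^{\tau_n+s/2}$ for all $s\in[s_0^{(n)},r_n]$. Parameters: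 $I=[-MN-1,MN+1]$, $p^{(n)}=18^{N-n}p_0$, $p_0\ge20Nd$. For $E\in I$, $\gamma>0$, an $n$-particle cube $\Lambda^{(n)}_L(\mathbf u)$ is $(E,\gamma)$-Good if $\min_{\mathbf x\in\Lambda^{(n)}_L(\mathbf u)}|\mathbf V(\mathbf x,\omega)-E|>\gamma$. *)

From HB Require Import structures.
From mathcomp Require Import all_boot all_order all_algebra.
From mathcomp Require Import all_classical all_reals all_analysis.
Set Implicit Arguments. Unset Strict Implicit. Unset Printing Implicit Defensive.
Import Order.TTheory GRing.Theory Num.Theory.
Local Open Scope ring_scope.

Definition site (d : nat) := 'I_d -> int.
Definition pt (n d : nat) := 'I_n -> site d.

Definition site_norm d (v : site d) : nat := \max_(i < d) `|v i|%N.
Definition pt_norm n d (x : pt n d) : nat := \max_(j < n) site_norm (x j).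
Definition site_sub d (a b : site d) : site d := fun i => a i - b i.
Definition pt_sub n d (x y : pt n d) : pt n d := fun j => site_sub (x j) (y j).
Definition site_br d (v : site d) : nat := maxn 1 (site_norm v).
Definition pt_br n d (x : pt n d) : nat := maxn 1 (pt_norm x).

Section Ham.
Variable R : realType.

(* T(x,y) = <y_j - x_j>^{-r} if x and y differ at most in the j-th particle *)
Definition Tkin n d (r : R) (x y : pt n d) : R :=
  if `[< exists j : 'I_n, forall i : 'I_n, i != j -> x i = y i >] then
    \big[Order.max/0]_(j < n | `[< forall i : 'I_n, i != j -> x i = y i >])
        ((site_br (site_sub (y j) (x j)))%:R `^ (- r))
  else 0.
(* Note: if x,y differ exactly in particle j, j is the unique admissible index;
   if x = y every index gives <0>^{-r} = 1.  So the max is just the value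
   <y_j - x_j>^{-r} of the definition. *)

Definition Uint n d (U : site d -> site d -> R) (x : pt n d) : R :=
  \sum_(j1 < n) \sum_(j2 < n | (j1 < j2)%N) U (x j1) (x j2).

Definition Vpot n d (V : site d -> R) (x : pt n d) : R := \sum_(j < n) V (x j).

Definition Hmat n d (r g : R) (U : site d -> site d -> R) (V : site d -> R)
  (x y : pt n d) : R :=
  (Tkin r x y + (if `[< x = y >] then Uint U x else 0)) / g
  + (if `[< x = y >] then Vpot V x else 0).

(* Points of the cube Lambda_L(u) = {x : ||x - u|| <= L} (L : nat) are
   parametrised bijectively by offsets w : 'I_n * 'I_d -> 'I_(2L+1),
   x_j^(i) = u_j^(i) + w(j,i) - L. *)
Definition cube_idx (n d L : nat) := {ffun 'I_n * 'I_d -> 'I_(L.*2.+1)}.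
Definition cube_pt n d L (u : pt n d) (w : cube_idx n d L) : pt n d :=
  fun j i => u j i + (w (j, i))%:Z - L%:Z.

(* Differences of two cube points: offsets in 'I_(4L+1), shifted by 2L. *)
Definition diff_idx (n d L : nat) := {ffun 'I_n * 'I_d -> 'I_((L.*2).*2.+1)}.
Definition diff_pt n d L (v : diff_idx n d L) : pt n d :=
  fun j i => (v (j, i))%:Z - (L.*2)%:Z.

Definition HcubeE n d L (r g : R) U V (u : pt n d) (E : R)
  (a b : cube_idx n d L) : R :=
  Hmat r g U V (cube_pt u a) (cube_pt u b) - (if a == b then E else 0).

Definition is_resolvent n d L (r g : R) U V (u : pt n d) (E : R)
  (G : cube_idx n d L -> cube_idx n d L -> R) : Prop :=
  (forall a b, \sum_c HcubeE r g U V u E a c * G c b = (a == b)%:R) /\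
  (forall a b, \sum_c G a c * HcubeE r g U V u E c b = (a == b)%:R).

(* Sobolev norm of a matrix on Lambda x Lambda:
   ||M||_s^2 = C0 sum_{v in Lambda - Lambda} (sup_{x-y=v} |M(x,y)|)^2 <v>^{2s}.
   Difference vectors not realised contribute 0 (empty max = 0). *)
Definition sob_norm n d L (C0 s : R) (u : pt n d)
  (M : cube_idx n d L -> cube_idx n d L -> R) : R :=
  Num.sqrt (C0 * \sum_(v : diff_idx n d L)
    (\big[Order.max/0]_(ab : cube_idx n d L * cube_idx n d L |
         `[< pt_sub (cube_pt u ab.1) (cube_pt u ab.2) = diff_pt v >])
        `|M ab.1 ab.2|) ^+ 2 * ((pt_br (diff_pt v))%:R `^ (2 * s))).

Definition NS n d L (r g : R) U V (u : pt n d) (E C0 tau s0 rn : R) : Prop :=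
  exists G, @is_resolvent n d L r g U V u E G /\
    forall s, s0 <= s <= rn -> sob_norm C0 s u G <= L%:R `^ (tau + s / 2).

Definition Good n d L (V : site d -> R) (u : pt n d) (E gamma : R) : Prop :=
  forall a : cube_idx n d L, `|Vpot V (cube_pt u a) - E| > gamma.

Definition holder_inv (mu : {measure set R -> \bar R}) (rho : R) : \bar R :=
  ereal_inf [set ereal_sup [set z | exists a b : R, 0 < b - a <= k /\
                   z = (((b - a) `^ (- rho))%:E * mu `[a, b]%classic)%E]
            | k in [set k : R | 0 < k]].
(* K_rho(mu) as an extended real (1/0 = +oo, 1/+oo = 0) *)
Definition Krho (mu : {measure set R -> \bar R}) (rho : R) : \bar R :=
  let D := holder_inv mu rho in
  if D == 0%E then +oo%E else if D == +oo%E then 0%E else ((fine D)^-1)%:E.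

End Ham.

(* On a good cube every diagonal entry [V(x) - E] of [H - E] exceeds [gamma] in
   absolute value, while the kinetic and interaction part [(T + U)/g] has row
   and column sums of order [|Lambda|/|g|].  For [|g|] large this perturbation
   is smaller than [gamma/2], so [H - E] is diagonally dominant: it is
   invertible and its inverse differs from the inverse diagonal by
   [O(1/(|g| gamma^2))] entrywise.  Hence the diagonal of [G] is [O(1/gamma)]
   and the off-diagonal entries are as small as we like, which bounds the
   Sobolev norm of [G] by [2 sqrt C0 / gamma] uniformly in [s].  Finally
   [gamma >= c L0^(-a)] with [a < tau] turns this into [L0^(tau + s/2)] once
   [L0^(s0/2) >= 2 sqrt C0 / c]. *)

From HB Require Import structures.
From mathcomp Require Import all_boot all_order all_algebra.
From mathcomp Require Import all_classical all_reals all_analysis.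
From mathcomp Require Import ring lra zify.
Import Order.TTheory GRing.Theory Num.Theory.
Set Implicit Arguments. Unset Strict Implicit. Unset Printing Implicit Defensive.
Local Open Scope ring_scope.

Lemma ler_norm_sum_mull (R : realDomainType) (T : finType) (F x : T -> R) m :
  (forall c, `|x c| <= m) -> `|\sum_c F c * x c| <= (\sum_c `|F c|) * m.
Proof.
move=> hx; apply: le_trans (ler_norm_sum _ _ _) _; rewrite mulr_suml.
by apply: ler_sum => c _; rewrite normrM ler_wpM2l.
Qed.

Lemma ler_norm_sum_mulr (R : realDomainType) (T : finType) (F x : T -> R) m :
  (forall c, `|x c| <= m) -> `|\sum_c x c * F c| <= (\sum_c `|F c|) * m.
Proof. by under eq_bigr do rewrite mulrC; exact: ler_norm_sum_mull. Qed.

Lemma sumr_norm_le_card (R : numDomainType) (T : finType) (F : T -> R) m :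
  (forall c, `|F c| <= m) -> \sum_c `|F c| <= #|T|%:R * m.
Proof.
by move=> F_le; rewrite [leRHS]mulr_natl -sumr_const; apply: ler_sum => c _.
Qed.

Lemma invertible_of_left_kernel0 (F : fieldType) (T : finType) (A : T -> T -> F) :
  (forall w : T -> F, (forall b, \sum_c w c * A c b = 0) -> forall c, w c = 0) ->
  exists G : T -> T -> F,
    (forall a b, \sum_c A a c * G c b = (a == b)%:R) /\
    (forall a b, \sum_c G a c * A c b = (a == b)%:R).
Proof.
move=> ker0.
pose mx (X : T -> T -> F) : 'M[F]_#|T| := \matrix_(i, j) X (enum_val i) (enum_val j).
have mx_mulE (X Y : T -> T -> F) a b :
    (mx X *m mx Y) (enum_rank a) (enum_rank b) = \sum_c X a c * Y c b.
  rewrite !mxE (reindex enum_rank) /=; last exact/onW_bij/enum_rank_bij.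
  by apply: eq_bigr => c _; rewrite !mxE !enum_rankK.
have unitA : mx A \in unitmx.
  rewrite unitmxE unitfE; apply/det0P => -[v /eqP v0 vA]; apply: v0.
  apply/matrixP => i k; rewrite mxE (ord1 i) -(enum_valK k).
  apply: (ker0 (fun c => v 0 (enum_rank c))) => b.
  transitivity ((v *m mx A) 0 (enum_rank b)); last by rewrite vA mxE.
  rewrite mxE [RHS](reindex enum_rank) /=; last exact/onW_bij/enum_rank_bij.
  by apply: eq_bigr => c _; rewrite mxE !enum_rankK.
pose G a b := invmx (mx A) (enum_rank a) (enum_rank b).
have invE : invmx (mx A) = mx G.
  by apply/matrixP => i j; rewrite mxE /G !enum_valK.
exists G; split=> a b; rewrite -mx_mulE -invE.
- by rewrite mulmxV // mxE (inj_eq enum_rank_inj).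
- by rewrite mulVmx // mxE (inj_eq enum_rank_inj).
Qed.

Section DiagonalDominance.
Variables (R : realFieldType) (T : finType).
Variables (A B : T -> T -> R) (D : T -> R) (gam e : R).
Hypothesis A_split : forall a b, A a b = B a b + (if a == b then D a else 0).
Hypothesis gam_gt0 : 0 < gam.
Hypothesis D_large : forall a, gam < `|D a|.
Hypothesis B_row : forall a, \sum_c `|B a c| <= e.
Hypothesis B_col : forall b, \sum_c `|B c b| <= e.
Hypothesis e_ge0 : 0 <= e.
Hypothesis e_small : e <= gam / 2.

Lemma sum_mulr_split_row (x : T -> R) a :
  \sum_c A a c * x c = \sum_c B a c * x c + D a * x a.
Proof.
under eq_bigr do rewrite A_split mulrDl.
rewrite big_split /=; congr (_ + _); rewrite (bigD1 a) //= eqxx big1 ?addr0 // => c.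
by rewrite eq_sym => /negbTE ->; rewrite mul0r.
Qed.

Lemma sum_mull_split_col (x : T -> R) b :
  \sum_c x c * A c b = \sum_c x c * B c b + x b * D b.
Proof.
under eq_bigr do rewrite A_split mulrDr.
rewrite big_split /=; congr (_ + _); rewrite (bigD1 b) //= eqxx big1 ?addr0 // => c /negbTE ->.
by rewrite mulr0.
Qed.

Lemma diag_dominant_left_kernel0 (w : T -> R) :
  (forall b, \sum_c w c * A c b = 0) -> forall c, w c = 0.
Proof.
move=> wA.
pose m := \big[Order.max/0]_c `|w c|.
have m_ge0 : 0 <= m := bigmax_ge_id _ _ _ _.
have m_half : m <= m / 2.
  apply: bigmax_le; first by rewrite divr_ge0.
  move=> b _; rewrite -(ler_pM2l gam_gt0).
  have := wA b; rewrite sum_mull_split_col => /eqP; rewrite addr_eq0 => /eqP wDb.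
  apply: le_trans (_ : `|w b * D b| <= _).
    by rewrite normrM mulrC ler_wpM2l // ltW.
  rewrite -normrN -wDb; apply: le_trans (ler_norm_sum_mulr _ (le_bigmax 0 (fun c => `|w c|))) _.
  apply: le_trans (ler_wpM2r m_ge0 (B_col b)) _.
  by rewrite mulrCA [e * m]mulrC ler_wpM2l.
have m0 : m = 0 by lra.
move=> c; apply/normr0_eq0/le_anti; rewrite normr_ge0 andbT -m0.
exact: le_bigmax.
Qed.

Lemma diag_dominant_right_inverse_near (G : T -> T -> R) :
  (forall a b, \sum_c A a c * G c b = (a == b)%:R) ->
  forall a b, `|G a b - (a == b)%:R / D a| <= 2 * e / gam ^+ 2.
Proof.
move=> AG a b.
have D_gt0 c : 0 < `|D c| := lt_trans gam_gt0 (D_large c).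
pose m := \big[Order.max/0]_c `|G c b|.
have m_ge0 : 0 <= m := bigmax_ge_id _ _ _ _.
have defect c : `|D c * G c b - (c == b)%:R| <= e * m.
  rewrite -(AG c) sum_mulr_split_row opprD addrCA subrr addr0 normrN.
  apply: le_trans (ler_norm_sum_mull _ (le_bigmax 0 (fun c => `|G c b|))) _.
  by apply: ler_wpM2r; [exact: m_ge0 | exact: B_row].
have gam_m : gam * m <= 2.
  suff : gam * m <= 1 + e * m.
    by have := ler_wpM2r m_ge0 e_small; lra.
  rewrite -ler_pdivlMl //; apply: bigmax_le => [|c _].
    by rewrite mulr_ge0 ?invr_ge0 ?addr_ge0 ?mulr_ge0 // ltW.
  rewrite ler_pdivlMl //; apply: le_trans (_ : `|D c * G c b| <= _).
    by rewrite normrM ler_wpM2r // ltW.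
  rewrite -[D c * G c b](subrK (c == b)%:R) addrC.
  apply: le_trans (ler_normD _ _) _; apply: lerD => //.
  by case: (c == b); rewrite ?normr1 ?normr0.
have -> : G a b - (a == b)%:R / D a = (D a * G a b - (a == b)%:R) / D a.
  by field; rewrite -normr_gt0.
rewrite normrM normfV ler_pdivrMr //; apply: le_trans (defect a) _.
have m_le : m <= 2 / gam by rewrite ler_pdivlMr // mulrC.
apply: le_trans (ler_wpM2l e_ge0 m_le) _.
have -> : e * (2 / gam) = 2 * e / gam ^+ 2 * gam by field; rewrite gt_eqF.
apply: ler_wpM2l; last exact: ltW.
by rewrite divr_ge0 ?mulr_ge0 ?exprn_ge0 // ltW.
Qed.

Lemma diag_dominant_inverse : exists G : T -> T -> R,
  [/\ (forall a b, \sum_c A a c * G c b = (a == b)%:R),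
       (forall a b, \sum_c G a c * A c b = (a == b)%:R) &
       (forall a b, `|G a b - (a == b)%:R / D a| <= 2 * e / gam ^+ 2)].
Proof.
have [G [AG GA]] := invertible_of_left_kernel0 diag_dominant_left_kernel0.
by exists G; split=> //; exact: diag_dominant_right_inverse_near.
Qed.

End DiagonalDominance.

Section HamiltonianEntries.
Variables (R : realType) (n d : nat).

Lemma Tkin_norm_le1 (r : R) (x y : pt n d) : 0 <= r -> `|Tkin r x y| <= 1.
Proof.
move=> r_ge0; rewrite /Tkin; case: ifP => _; last by rewrite normr0.
rewrite ger0_norm ?bigmax_ge_id //; apply: bigmax_le => // j _.
have br_ge1 : 1 <= (site_br (site_sub (y j) (x j)))%:R :> R.
  by rewrite ler1n leq_maxl.
rewrite powRN invf_le1 ?powR_gt0 ?(lt_le_trans ltr01) //.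
by rewrite -[leLHS](powRr0 (site_br (site_sub (y j) (x j)))%:R) ler_powR.
Qed.

Lemma Uint_norm_le (U : site d -> site d -> R) M1 (x : pt n d) :
  (forall x x', `|U x x'| <= M1) -> `|Uint U x| <= n%:R ^+ 2 * M1.
Proof.
move=> U_le; have M1_ge0 : 0 <= M1 := le_trans (normr_ge0 _) (U_le (fun=> 0) (fun=> 0)).
rewrite expr2 -mulrA; apply: le_trans (ler_norm_sum _ _ _) _.
apply: le_trans (_ : \sum_(j1 < n) n%:R * M1 <= _); last first.
  by rewrite sumr_const card_ord [leRHS]mulr_natl.
apply: ler_sum => j1 _; apply: le_trans (ler_norm_sum _ _ _) _.
apply: le_trans (_ : \sum_(j2 < n) M1 <= _); last by rewrite sumr_const card_ord [leRHS]mulr_natl.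
by rewrite big_mkcond; apply: ler_sum => j2 _; case: ifP.
Qed.

End HamiltonianEntries.

(* Index of the zero difference vector, since [diff_pt] shifts offsets by [2L]. *)
Definition diff_idx0 n d L : diff_idx n d L := [ffun=> inord L.*2].

Section Cube.
Variables (n d L : nat) (u : pt n d).

Lemma cube_pt_inj : injective (@cube_pt n d L u).
Proof.
move=> a b ab; apply/ffunP => -[j i]; apply: val_inj.
by have /addIr/addrI[] := congr1 (fun x : pt n d => x j i) ab.
Qed.

Lemma asbool_cube_pt_eq (a b : cube_idx n d L) :
  `[< cube_pt u a = cube_pt u b >] = (a == b).
Proof.
apply/asboolP/eqP => [/cube_pt_inj //|-> //].
Qed.

Lemma cube_pt_sub_diff_idx0 (a b : cube_idx n d L) (v : diff_idx n d L) :
  pt_sub (cube_pt u a) (cube_pt u b) = diff_pt v -> (a == b) = (v == diff_idx0 n d L).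
Proof.
move=> ab_v.
have entry k : (a k)%:Z - (b k)%:Z = (v k)%:Z - (L.*2)%:Z.
  have := congr1 (fun x : pt n d => x k.1 k.2) ab_v.
  by rewrite /pt_sub /site_sub /cube_pt /diff_pt -surjective_pairing => <-; ring.
have val_v0 k : diff_idx0 n d L k = L.*2 :> nat by rewrite ffunE inordK //; lia.
apply/eqP/eqP => [ab | v0]; apply/ffunP => k; apply: val_inj; have := entry k.
- by rewrite ab /= val_v0 subrr => /eqP; rewrite eq_sym subr_eq0 => /eqP[].
- by rewrite v0 /= val_v0 subrr => /eqP; rewrite subr_eq0 => /eqP[].
Qed.

Lemma pt_br_diff_idx0 : pt_br (diff_pt (diff_idx0 n d L)) = 1%N.
Proof.
rewrite /pt_br /pt_norm big1 // => j _; rewrite /site_norm big1 // => i _.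
by rewrite /diff_pt ffunE inordK ?subrr //; lia.
Qed.

Lemma pt_br_diff_pt_le (v : diff_idx n d L) : (1 <= L)%N -> (pt_br (diff_pt v) <= L.*2)%N.
Proof.
move=> L_ge1; rewrite /pt_br geq_max; apply/andP; split; first lia.
apply/bigmax_leqP => j _; apply/bigmax_leqP => i _.
rewrite /diff_pt; have := ltn_ord (v (j, i)); move: (nat_of_ord _) => k k_lt; lia.
Qed.

End Cube.

Section CubeMatrices.
Variables (R : realType) (n d L : nat).

Lemma sob_norm_le_entries (u : pt n d) (C0 s rn alpha beta : R)
    (G : cube_idx n d L -> cube_idx n d L -> R) :
  (1 <= L)%N -> 0 <= C0 -> 0 <= s <= rn -> 0 <= beta ->
  (forall a, `|G a a| <= alpha) -> (forall a b, a != b -> `|G a b| <= beta) ->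
  sob_norm C0 s u G <= Num.sqrt (C0 * (alpha ^+ 2 +
     #|diff_idx n d L|%:R * (beta ^+ 2 * (L.*2)%:R `^ (2 * rn)))).
Proof.
move=> L_ge1 C0_ge0 /andP[s_ge0 s_le] beta_ge0 G_diag G_off.
have alpha_ge0 : 0 <= alpha := le_trans (normr_ge0 _) (G_diag [ffun=> ord0]).
pose W := (L.*2)%:R `^ (2 * rn) : R.
pose maxG (v : diff_idx n d L) := \big[Order.max/0]_(ab : cube_idx n d L * cube_idx n d L |
  `[< pt_sub (cube_pt u ab.1) (cube_pt u ab.2) = diff_pt v >]) `|G ab.1 ab.2|.
have maxG_le v : maxG v <= if v == diff_idx0 n d L then alpha else beta.
  apply: bigmax_le => [|[a b] /asboolP /cube_pt_sub_diff_idx0 <-]; first by case: ifP.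
  by case: eqVneq => [->|]; [exact: G_diag | exact: G_off].
have br_le v : (pt_br (diff_pt v))%:R `^ (2 * s) <= if v == diff_idx0 n d L then 1 else W.
  case: eqVneq => [->|_]; first by rewrite pt_br_diff_idx0 powR1.
  apply: le_trans (_ : (L.*2)%:R `^ (2 * s) <= _).
    by apply: ge0_ler_powR; rewrite ?nnegrE ?ler_nat ?pt_br_diff_pt_le //; lra.
  by apply: ler_powR; [rewrite ler1n; lia | lra].
have term_le v : maxG v ^+ 2 * (pt_br (diff_pt v))%:R `^ (2 * s)
    <= if v == diff_idx0 n d L then alpha ^+ 2 else beta ^+ 2 * W.
  have maxG_ge0 : 0 <= maxG v := bigmax_ge_id _ _ _ _.
  have sq_le x y : 0 <= x -> x <= y -> x ^+ 2 <= y ^+ 2.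
    by move=> x_ge0 xy; apply: lerXn2r; rewrite ?nnegrE ?(le_trans x_ge0 xy).
  move: (maxG_le v) (br_le v); case: (v == diff_idx0 n d L) => max_le pow_le.
  - rewrite -[leRHS]mulr1.
    by apply: ler_pM; [exact: exprn_ge0 | exact: powR_ge0 | exact: sq_le | exact: pow_le].
  - by apply: ler_pM; [exact: exprn_ge0 | exact: powR_ge0 | exact: sq_le | exact: pow_le].
apply: ler_wsqrtr; apply: ler_wpM2l => //.
rewrite (bigD1 (diff_idx0 n d L)) //; apply: lerD.
  by have := term_le (diff_idx0 n d L); rewrite eqxx.
apply: le_trans (_ : \sum_(v | v != diff_idx0 n d L) beta ^+ 2 * W <= _).
  by apply: ler_sum => v /negbTE v_ne; have := term_le v; rewrite v_ne.
apply: le_trans (_ : \sum_v beta ^+ 2 * W <= _); last by rewrite sumr_const mulr_natl; exact: lexx.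
rewrite big_mkcond; apply: ler_sum => v _.
by case: (v != _); rewrite ?mulr_ge0 ?exprn_ge0 ?powR_ge0.
Qed.

Definition TU_cube (r : R) (U : site d -> site d -> R) (u : pt n d) (a b : cube_idx n d L) : R :=
  Tkin r (cube_pt u a) (cube_pt u b) + (if a == b then Uint U (cube_pt u a) else 0).

Lemma HcubeE_split (r g : R) U V (u : pt n d) E (a b : cube_idx n d L) :
  HcubeE r g U V u E a b =
  TU_cube r U u a b / g + (if a == b then Vpot V (cube_pt u a) - E else 0).
Proof.
rewrite /HcubeE /Hmat /TU_cube asbool_cube_pt_eq.
by case: eqVneq => [->|_]; rewrite ?addrA ?subr0.
Qed.

Lemma TU_cube_norm_le (r M1 : R) U (u : pt n d) (a b : cube_idx n d L) :
  0 <= r -> (forall x x', `|U x x'| <= M1) -> `|TU_cube r U u a b| <= 1 + n%:R ^+ 2 * M1.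
Proof.
move=> r_ge0 U_le; apply: le_trans (ler_normD _ _) _; apply: lerD; first exact: Tkin_norm_le1.
case: ifP => _; first exact: Uint_norm_le.
by rewrite normr0 mulr_ge0 ?exprn_ge0 // (le_trans (normr_ge0 _) (U_le (fun=> 0) (fun=> 0))).
Qed.

End CubeMatrices.

Lemma good_cube_resolvent (R : realType) (n d L : nat) (r C0 rn gam M1 : R)
    (U : site d -> site d -> R) :
  (1 <= L)%N -> 0 < r -> 0 <= C0 -> 0 < gam -> (forall x x', `|U x x'| <= M1) ->
  exists g0 : R, forall g : R, g != 0 -> g0 < `|g| ->
  forall (E : R) (V : site d -> R) (u : pt n d), Good L V u E gam ->
  exists G : cube_idx n d L -> cube_idx n d L -> R, is_resolvent r g U V u E G /\
    forall s, 0 <= s <= rn -> sob_norm C0 s u G <= 2 * Num.sqrt C0 / gam.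
Proof.
move=> L_ge1 r_gt0 C0_ge0 gam_gt0 U_le.
set K := #|cube_idx n d L|%:R : R.
set K' := #|diff_idx n d L|%:R : R.
set W := (L.*2)%:R `^ (2 * rn) : R.
set del := (2 * (K' * W + 1))^-1.
set beta := 1 + n%:R ^+ 2 * M1.
have KW_ge0 : 0 <= K' * W by rewrite mulr_ge0 ?powR_ge0.
have del_gt0 : 0 < del by rewrite invr_gt0; lra.
have del_KW : del * (2 * (K' * W + 1)) = 1 by rewrite mulVf //; lra.
have beta_ge0 : 0 <= beta.
  have := le_trans (normr_ge0 _) (U_le (fun=> 0) (fun=> 0)).
  by rewrite /beta => M1_ge0; rewrite addr_ge0 ?mulr_ge0 ?exprn_ge0.
exists (2 * K * beta / (del * gam)) => g g_neq0 g_large E V u good.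
have g_gt0 : 0 < `|g| by rewrite normr_gt0.
set e := K * (beta / `|g|).
have e_ge0 : 0 <= e by rewrite mulr_ge0 ?divr_ge0.
have e_small : e <= del * gam / 2.
  move: g_large; rewrite ltr_pdivrMr ?mulr_gt0 // => g_large.
  rewrite /e mulrA ler_pdivrMr //; nra.
have del_le : del <= 1 / 2 by nra.
have e_half : e <= gam / 2 by nra.
have entry_le (a b : cube_idx n d L) : `|TU_cube r U u a b / g| <= beta / `|g|.
  by rewrite normrM normfV ler_pM2r ?invr_gt0 // TU_cube_norm_le // ltW.
have [G [AG GA G_near]] := diag_dominant_inverse (@HcubeE_split R n d L r g U V u E)
  gam_gt0 good (fun a => sumr_norm_le_card (entry_le a)) (fun b => sumr_norm_le_card (entry_le^~ b))
  e_ge0 e_half.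
exists G; split=> [// | s s_range].
have near_le : 2 * e / gam ^+ 2 <= del / gam.
  rewrite ler_pdivrMr ?exprn_gt0 //.
  have -> : del / gam * gam ^+ 2 = del * gam by field; rewrite gt_eqF.
  lra.
have G_off a b : a != b -> `|G a b| <= del / gam.
  move=> /negbTE ab; have := G_near a b; rewrite ab mul0r subr0 => G_ab.
  exact: le_trans G_ab near_le.
have G_diag a : `|G a a| <= (1 + del) / gam.
  have := G_near a a; rewrite eqxx mul1r => G_aa.
  rewrite -[G a a](subrK (Vpot V (cube_pt u a) - E)^-1) mulrDl mul1r.
  apply: le_trans (ler_normD _ _) _; rewrite addrC; apply: lerD; last exact: le_trans G_aa near_le.
  by rewrite normfV lef_pV2 ?posrE ?(lt_trans gam_gt0 (good a)) // ltW.
have del_gam_ge0 : 0 <= del / gam by rewrite divr_ge0 // ltW.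
apply: le_trans (sob_norm_le_entries u L_ge1 C0_ge0 s_range del_gam_ge0 G_diag G_off) _.
have sum_le : ((1 + del) / gam) ^+ 2 + K' * ((del / gam) ^+ 2 * W) <= (2 / gam) ^+ 2.
  have -> : ((1 + del) / gam) ^+ 2 + K' * ((del / gam) ^+ 2 * W) =
            ((1 + del) ^+ 2 + K' * W * del * del) / gam ^+ 2 by field; rewrite gt_eqF.
  rewrite expr_div_n ler_pM2r ?invr_gt0 ?exprn_gt0 //; nra.
apply: le_trans (ler_wsqrtr (ler_wpM2l C0_ge0 sum_le)) _.
rewrite sqrtrM // sqrtr_sqr ger0_norm; last by rewrite divr_ge0 // ltW.
by rewrite mulrA [_ * 2]mulrC.
Qed.

Lemma scale_bound_le_powR (R : realType) (x c gam a tau s0 s l : R) :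
  0 <= x -> 0 < c -> 0 < s0 -> 1 <= l -> (x / c) `^ (2 / s0) <= l ->
  c * l `^ (- a) <= gam -> a <= tau -> s0 <= s -> x / gam <= l `^ (tau + s / 2).
Proof.
move=> x_ge0 c_gt0 s0_gt0 l_ge1 x_scale gam_ge a_le s0_le.
have l_gt0 : 0 < l by lra.
have xc_ge0 : 0 <= x / c by rewrite divr_ge0 // ltW.
have xc_le : x / c <= l `^ (s0 / 2).
  have -> : x / c = ((x / c) `^ (2 / s0)) `^ (s0 / 2).
    rewrite -powRrM.
    have -> : 2 / s0 * (s0 / 2) = 1 by field; rewrite gt_eqF.
    by rewrite powRr1.
  by apply: ge0_ler_powR; rewrite ?nnegrE ?powR_ge0 ?divr_ge0 // ltW.
have gam_inv : gam^-1 <= l `^ a / c.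
  have lc_gt0 : 0 < c * l `^ (- a) by rewrite mulr_gt0 // powR_gt0.
  rewrite -[leRHS]invrK invf_div -powRN lef_pV2 ?posrE //.
  exact: lt_le_trans gam_ge.
apply: le_trans (_ : x / c * l `^ a <= _).
  by rewrite -mulrA [_^-1 * _]mulrC; apply: ler_wpM2l.
apply: le_trans (_ : l `^ (s0 / 2) * l `^ a <= _).
  by apply: ler_wpM2r; [exact: powR_ge0 | exact: xc_le].
rewrite -powRD; last by rewrite (gt_eqF l_gt0) implybT.
by apply: ler_powR; lra.
Qed.

Local Open Scope classical_set_scope.
Local Open Scope ring_scope.

Theorem lemma4p2
  (R : realType) (N d : nat) (r : R) (U : site d -> site d -> R) (M1 r0 : R)
  (mu : probability R R) (M rho kappa : R) (p0 C0 : R)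
  (n : nat) (s0 rn : R) :
  (2 <= N)%N -> (1 <= d)%N -> 0 < r ->
  (* interaction *)
  (forall x x', U x x' = U x' x) -> (forall x x', `|U x x'| <= M1) ->
  1 <= r0 -> (forall x x', r0 <= (site_norm (site_sub x x'))%:R -> U x x' = 0) ->
  (* single-site distribution *)
  0 < M -> mu (~` `[- M, M]%classic) = 0%E ->
  0 < rho -> (0 < Krho mu rho)%E ->
  0 < kappa -> (kappa%:E < Krho mu rho)%E ->
  (* parameters *)
  (1 <= n <= N)%N ->
  (n * d)%:R / 2 < s0 -> s0 <= rn -> rn < r - (n * d)%:R / 2 -> 0 < C0 ->
  (20 * N * d)%:R <= p0 ->
  let pn := (18 ^ (N - n))%:R * p0 in
  let a := (2 * pn + ((2 * n + 1) * d)%:R) / rho in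
  exists L0bar : R, forall L0 : nat, L0bar <= L0%:R ->
  forall gamma : R,
    4^-1 * n%:R `^ (- 1 / rho) * 3 `^ (- ((2 * n + 1) * d)%:R / rho)
      * kappa `^ (1 / rho) * L0%:R `^ (- a) <= gamma ->
  exists g0bar : R, forall g : R, g != 0 -> g0bar < `|g| ->
  forall (tau : R), a < tau ->
  forall (E : R), - M * N%:R - 1 <= E <= M * N%:R + 1 ->
  forall (V : site d -> R), (forall x, - M <= V x <= M) ->
  forall u : pt n d,
    Good L0 V u E gamma -> NS L0 r g U V u E C0 tau s0 rn.

Proof.
(* The estimate is deterministic and only uses [r > 0], [|U| <= M1], [n >= 1],
   [s0 > 0] and [C0 > 0]. *)
move=> _ _ r_gt0 _ U_le _ _ _ _ _ _ kappa_gt0 _ /andP[n_ge1 _] s0_gt _ _ C0_gt0 _ pn a.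
set c := 4^-1 * _ * _ * _.
have c_gt0 : 0 < c by rewrite !mulr_gt0 ?powR_gt0 ?invr_gt0 ?ltr0n.
have s0_gt0 : 0 < s0 by apply: le_lt_trans s0_gt; rewrite divr_ge0.
exists (Num.max 1 ((2 * Num.sqrt C0 / c) `^ (2 / s0))) => L0.
rewrite ge_max => /andP[L0_ge1 L0_scale] gam gam_ge.
have gam_gt0 : 0 < gam.
  by apply: lt_le_trans gam_ge; rewrite mulr_gt0 ?powR_gt0 // (lt_le_trans ltr01).
have L0_ge1' : (1 <= L0)%N by rewrite -(ler_nat R).
have [g0 g0_spec] := good_cube_resolvent n rn L0_ge1' r_gt0 (ltW C0_gt0) gam_gt0 U_le.
exists g0 => g g_neq0 g_large tau a_lt_tau E _ V _ u good.
have [G [G_res G_sob]] := g0_spec g g_neq0 g_large E V u good.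
exists G; split=> // s /andP[s0_le s_le].
apply: le_trans (G_sob s _) _; first by rewrite s_le andbT (le_trans (ltW s0_gt0)).
apply: scale_bound_le_powR c_gt0 s0_gt0 L0_ge1 L0_scale gam_ge (ltW a_lt_tau) s0_le.
by rewrite mulr_ge0 ?sqrtr_ge0.
Qed.
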